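(* Let $\bar u=(u_\beta)_{\beta<\alpha}$ be a densely non-increasing sequence of elements of a linear order $(U,<)$. If the range $\{u_\beta\mid\beta<\alpha\}$ of $\bar u$ is finite, then $\bar u$ is non-increasing.
   Context: A sequence $(u_\beta)_{\beta<\alpha}$ indexed by a countable ordinal is non-increasing if $\beta<\beta'<\alpha$ implies $u_\beta\ge u_{\beta'}$. It is densely non-increasing if for all $\gamma<\gamma'\le\alpha$, either $u_\beta=u_\gamma$ for all $\gamma\le\beta<\gamma'$, or there exist $\gamma\le\beta<\beta'<\gamma'$ with $u_\beta>u_{\beta'}$. *)

From mathcomp Require Import all_boot all_order.
Set Implicit Arguments. Unset Strict Implicit. Unset Printing Implicit Defensive.
Import Order.TTheory.
Local Open Scope order_scope.

(* A countable ordinal alpha is represented (up to isomorphism) by a countable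
   well-ordered type I: the elements of I are the indices beta < alpha.
   Bounds gamma' <= alpha are represented by [option I], [None] standing for alpha. *)

Definition well_ordered (d : Order.disp_t) (I : orderType d) : Prop :=
  well_founded (fun x y : I => x < y).

Definition countable_type (T : Type) : Prop :=
  exists f : T -> nat, injective f.

Definition lt_bound (d : Order.disp_t) (I : orderType d) (b : I) (g : option I) : bool :=
  if g is Some x then b < x else true.

Definition non_increasing (d : Order.disp_t) (I : orderType d)
    (dU : Order.disp_t) (U : orderType dU) (u : I -> U) : Prop :=
  forall b b' : I, b < b' -> u b' <= u b.

Definition densely_non_increasing (d : Order.disp_t) (I : orderType d)
    (dU : Order.disp_t) (U : orderType dU) (u : I -> U) : Prop :=
  forall (g : I) (g' : option I), lt_bound g g' ->
    (forall b : I, g <= b -> lt_bound b g' -> u b = u g) \/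
    (exists b b' : I, [/\ g <= b, b < b', lt_bound b' g' & u b' < u b]).

Definition finite_range (T : Type) (dU : Order.disp_t) (U : orderType dU)
    (u : T -> U) : Prop :=
  exists s : seq U, forall t : T, u t \in s.

(* Suppose some y < x has u y < u x, and take x least with this property, so
   that u is non-increasing before x.  Having finitely many values, u is then
   constant, equal to some v <= u y < u x, on a final segment [c, x) of x.
   Dense non-increase on [c, x] demands a strict descent inside [c, x], which
   is impossible: u is constant on [c, x) and jumps up at x.  Countability of
   the index ordinal is not needed. *)

From mathcomp Require Import all_boot all_order.
From Stdlib Require Import Classical Wf_nat.
Set Implicit Arguments. Unset Strict Implicit. Unset Printing Implicit Defensive.
Import Order.TTheory.
Local Open Scope order_scope.

Lemma wf_ex_minimal (T : Type) (R : T -> T -> Prop) (P : T -> Prop) :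
  well_founded R -> (exists t, P t) -> exists2 m, P m & forall t, P t -> ~ R t m.
Proof.
move=> wfR [t Pt]; elim/(well_founded_ind wfR): t Pt => t IH Pt.
case: (classic (exists2 t', P t' & R t' t)) => [[t' Pt' Rt't] | no_below].
  exact: IH Rt't Pt'.
by exists t => // t' Pt' Rt't; apply: no_below; exists t'.
Qed.

Lemma well_ordered_ex_min (d : Order.disp_t) (I : orderType d) (P : I -> Prop) :
  well_ordered I -> (exists t, P t) -> exists2 m, P m & forall t, P t -> m <= t.
Proof.
move=> wfI /(wf_ex_minimal wfI) [m Pm m_min].
by exists m => // t Pt; rewrite leNgt; apply/negP; apply: m_min.
Qed.

Lemma count_lt_mono (d : Order.disp_t) (U : orderType d) (s : seq U) (v w : U) :
  v \in s -> v < w -> (count (< v) s < count (< w) s)%N.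
Proof.
move=> + vw; elim: s => //= a s IH; rewrite in_cons => /predU1P[<- | vs].
  rewrite ltxx vw add0n add1n ltnS; apply: sub_count => x /= xv.
  exact: lt_trans xv vw.
rewrite -addnS leq_add ?IH //; case: ltP => //= av.
by rewrite (lt_trans av vw).
Qed.

Lemma finite_range_ex_min (T : Type) (dU : Order.disp_t) (U : orderType dU)
    (f : T -> U) (P : T -> Prop) :
  finite_range f -> (exists t, P t) ->
  exists2 c, P c & forall t, P t -> f c <= f t.
Proof.
move=> [s f_in_s] /(wf_ex_minimal (well_founded_ltof _ (fun t => count (< f t) s))).
move=> [c Pc c_min]; exists c => // t Pt; rewrite leNgt; apply/negP => ftc.
by apply: (c_min t Pt); apply/ssrnat.ltP; exact: count_lt_mono.
Qed.

Lemma lt_bound_le (d : Order.disp_t) (I : orderType d) (t b : I) (g : option I) :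
  t <= b -> lt_bound b g -> lt_bound t g.
Proof. by case: g => //= x; apply: le_lt_trans. Qed.

(* The successor of [b], or [alpha] when [b] is the last index. *)
Lemma ex_succ_bound (d : Order.disp_t) (I : orderType d) (b : I) :
  well_ordered I ->
  exists2 g : option I, lt_bound b g & forall t, lt_bound t g -> t <= b.
Proof.
move=> wfI; case: (classic (exists x, b < x)) => [above_b | b_last].
  have [x bx x_min] := well_ordered_ex_min wfI above_b.
  exists (Some x) => // t /= tx; rewrite leNgt; apply/negP => bt.
  by move: (x_min t bt); rewrite leNgt tx.
exists None => // t _; rewrite leNgt; apply/negP => bt.
by apply: b_last; exists t.
Qed.

Section DenselyNonIncreasing.

Variables (d : Order.disp_t) (I : orderType d) (dU : Order.disp_t) (U : orderType dU).
Variable u : I -> U.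
Hypotheses (wfI : well_ordered I) (u_dense : densely_non_increasing u)
  (u_fin : finite_range u).

Definition non_increasing_before (x : I) : Prop :=
  forall t t', t < t' -> t' < x -> u t' <= u t.

Lemma ex_constant_tail (y x : I) : y < x -> non_increasing_before x ->
  exists c, [/\ c < x, u c <= u y & forall t, c <= t -> t < x -> u t = u c].
Proof.
move=> yx u_ni.
have [c [yc cx] c_min] :=
  finite_range_ex_min (P := fun t => y <= t /\ t < x) u_fin (ex_intro _ y (conj (lexx y) yx)).
exists c; split=> //; first exact: c_min.
move=> t ct tx; apply/eqP; rewrite eq_le c_min ?andbT; last by split=> //; apply: le_trans ct.
by rewrite le_eqVlt in ct; case/predU1P: ct => [-> // | ct]; apply: u_ni.
Qed.

Lemma non_increasing_before_le (x : I) : non_increasing_before x ->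
  forall y, y < x -> u x <= u y.
Proof.
move=> u_ni y yx; rewrite leNgt; apply/negP => uyx.
have [c [cx ucy u_const]] := ex_constant_tail yx u_ni.
have ucx : u c < u x := le_lt_trans ucy uyx.
have [g xg g_succ] := ex_succ_bound x wfI.
case: (u_dense (lt_bound_le (ltW cx) xg)) => [u_eq | [b [b' [cb bb' b'g ub]]]].
  by move: ucx; rewrite -(u_eq x (ltW cx) xg) ltxx.
have bx : b < x := lt_le_trans bb' (g_succ b' b'g).
move: ub; rewrite (u_const b cb bx).
case: (ltgtP b' x) (g_succ b' b'g) => [b'x _ | // | -> _].
  by rewrite u_const ?ltxx // (le_trans cb (ltW bb')).
by move=> uxc; move: (lt_trans uxc ucx); rewrite ltxx.
Qed.

End DenselyNonIncreasing.

Theorem mainTheorem13 (d : Order.disp_t) (I : orderType d)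
  (dU : Order.disp_t) (U : orderType dU) (u : I -> U) :
  well_ordered I -> countable_type I ->
  densely_non_increasing u -> finite_range u -> non_increasing u.
Proof.
move=> wfI _ u_dense u_fin y x; elim/(well_founded_ind wfI): x y => x IH y yx.
apply: (non_increasing_before_le wfI u_dense u_fin) yx => t t' tt' t'x.
exact: IH.
Qed.
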